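(* Let $L$ be the infinite matrix with entries $L_{i,j}=l_{i,j}$ for $i\ge j\ge0$ and $L_{i,j}=0$ for $j>i$, let $M$ be the infinite matrix with entries $M_{i,j}=l_{i+j,j}$ ($i,j\ge0$), and let $U$ be the infinite upper-triangular matrix with entries $U_{i,j}=\binom{j}{i}$ ($i,j\geq0$). Then $M=LU$ (the product being well defined since each entry is a finite sum). In particular, for every $n\ge1$, the square matrix $M(n)$ formed by the first $n$ rows and columns of $M$ satisfies $\det M(n)=1$.
   Context: For $i,j\in\mathbb N$ with $j\le i$, $l_{i,j}=\sum_{k=0}^{i-j}\binom{\frac{i-1}{2}+x-k}{k}\binom{\frac{i-1}{2}+k-x}{i-j-k}$, where $\binom{z}{k}=\frac{z(z-1)\cdots(z-k+1)}{k!}$; this sum is a polynomial in $x$ which is constant in $x$, so $l_{i,j}$ is a well-defined number (e.g. its value at $x=0$). These numbers form a Pascal-like triangle starting with rows $1$; $-1,1$; $1,0,1$; $-1,1,1,1$; $1,0,2,2,1$. *)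

From mathcomp Require Import all_boot all_order all_algebra.
Set Implicit Arguments. Unset Strict Implicit. Unset Printing Implicit Defensive.
Import Order.TTheory GRing.Theory Num.Theory.
Local Open Scope ring_scope.

Definition gbinom (z : rat) (k : nat) : rat :=
  (\prod_(m < k) (z - m%:R)) / (k`!)%:R.

Definition lpoly (i j : nat) (x : rat) : rat :=
  \sum_(k < (i - j)%N.+1)
     gbinom ((i%:R - 1) / 2%:R + x - k%:R) k *
     gbinom ((i%:R - 1) / 2%:R + k%:R - x) (i - j - k)%N.

(* l_{i,j} (meaningful for j <= i): the value of the constant polynomial at x = 0. *)
Definition l (i j : nat) : rat := lpoly i j 0.

Definition Lmat (i j : nat) : rat := if (j <= i)%N then l i j else 0.
Definition Mmat (i j : nat) : rat := l (i + j) j.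
Definition Umat (i j : nat) : rat := ('C(j, i))%:R.

Definition lead_submx (A : nat -> nat -> rat) (n : nat) : 'M[rat]_n :=
  \matrix_(i < n, j < n) A i j.

From mathcomp Require Import all_boot all_order all_algebra.
From mathcomp Require Import ring zify.
Set Implicit Arguments. Unset Strict Implicit. Unset Printing Implicit Defensive.
Import GRing.Theory Num.Theory.
Local Open Scope ring_scope.

(** Write [S u v d] for the convolution [sum_k binom(u-k, k) binom(v+k, d-k)], so
   that [l_{i,j}] is [S (c+x) (c-x) (i-j)] with [c = (i-1)/2]. Pascal's rule in
   each of the two upper arguments gives two three-term recurrences for [S];
   combining them shows [S (u+1) (v-1) d = S u v d], so the polynomial
   [x |-> l_{i,j}(x)] is 1-periodic, hence constant. Evaluating at [x = 1/2] and
   using Pascal's rule in [v] once more shows that the triangle [l] satisfies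
   Pascal's recurrence [l_{n+1,j+1} = l_{n,j} + l_{n,j+1}]. For any lower
   triangular array with this recurrence, iterating it [j] times expresses
   [l_{i+j,j}] as [sum_k l_{i,k} binom(j,k)], which is [M = LU]; the leading
   minors of [L] and [U] are unitriangular, whence [det M(n) = 1]. *)

Lemma big_ord_widen_supp (R : nmodType) n1 n2 (F : nat -> R) :
  (n1 <= n2)%N -> (forall k, (n1 <= k)%N -> F k = 0) ->
  \sum_(k < n1) F k = \sum_(k < n2) F k.
Proof.
move=> le12 F0; rewrite (big_ord_widen _ _ le12) big_mkcond /=.
by apply: eq_bigr => k _; case: ltnP => // /F0 ->.
Qed.

Lemma poly_const_on_nat (R : numDomainType) (p : {poly R}) c :
  (forall n : nat, p.[n%:R] = c) -> p = c%:P.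
Proof.
move=> pc; apply/eqP; rewrite -subr_eq0; apply/eqP.
set q := p - c%:P.
apply: (@roots_geq_poly_eq0 _ _ [seq n%:R | n <- iota 0 (size q)]).
- by apply/allP => _ /mapP [n _ ->]; rewrite /root !hornerE pc subrr.
- by rewrite map_inj_uniq ?iota_uniq // => m n /eqP; rewrite eqr_nat => /eqP.
- by rewrite size_map size_iota.
Qed.

Section PascalArray.

Variables (R : pzSemiRingType) (A : nat -> nat -> R).
Hypothesis A_pascal : forall n j, A n.+1 j.+1 = A n j + A n j.+1.

Lemma pascal_binomial_expansion m i e :
  A (i + m) (e + m) = \sum_(k < m.+1) 'C(m, k)%:R * A i (e + k).
Proof.
elim: m i e => [|m IHm] i e; first by rewrite big_ord1 !addn0 bin0 mul1r.
rewrite !addnS A_pascal IHm -addSn IHm.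
have binS_mul k : 'C(m.+1, k.+1)%:R * A i (e + k.+1)
    = 'C(m, k.+1)%:R * A i (e + k.+1) + 'C(m, k)%:R * A i (e.+1 + k).
  by rewrite binS natrD mulrDl addSnnS.
have -> : \sum_(k < m.+1) 'C(m, k)%:R * A i (e + k)
    = \sum_(k < m.+2) 'C(m, k)%:R * A i (e + k).
  by rewrite [RHS]big_ord_recr /= bin_small // mul0r addr0.
rewrite big_ord_recl [RHS]big_ord_recl (eq_bigr _ (fun (k : 'I_m.+1) _ => binS_mul k)).
by rewrite big_split /= !bin0 addrA.
Qed.

Hypothesis A_lower : forall i j, (i < j)%N -> A i j = 0.

Lemma pascal_lower_factor i j :
  A (i + j) j = \sum_(k < i.+1) A i k * 'C(j, k)%:R.
Proof.
rewrite -[j in A _ j]add0n pascal_binomial_expansion.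
rewrite (@big_ord_widen_supp _ _ (i + j).+1 (fun k => 'C(j, k)%:R * A i (0 + k)));
  last 2 first.
- by rewrite ltnS leq_addl.
- by move=> k /bin_small ->; rewrite mul0r.
rewrite [RHS](@big_ord_widen_supp _ _ (i + j).+1 (fun k => A i k * 'C(j, k)%:R));
  last 2 first.
- by rewrite ltnS leq_addr.
- by move=> k ik; rewrite A_lower ?mul0r.
by apply: eq_bigr => k _; rewrite add0n mulr_natl mulr_natr.
Qed.

End PascalArray.

Lemma gbinom0 z : gbinom z 0 = 1.
Proof. by rewrite /gbinom big_ord0 fact0 invr1 mulr1. Qed.

Lemma gbinomS z k : gbinom z k.+1 = gbinom (z - 1) k.+1 + gbinom (z - 1) k.
Proof.
rewrite /gbinom big_ord_recl big_ord_recr /= factS natrM mulrS.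
under eq_bigr => m _ do rewrite /bump /= add1n mulrS opprD addrA.
have kfact_neq0 : (k`!)%:R != 0 :> rat by rewrite pnatr_eq0 -lt0n fact_gt0.
have k1_neq0 : 1 + k%:R != 0 :> rat by rewrite -mulrS pnatr_eq0.
by field; rewrite k1_neq0 kfact_neq0.
Qed.

Definition binom_conv (u v : rat) (d : nat) : rat :=
  \sum_(k < d.+1) gbinom (u - k%:R) k * gbinom (v + k%:R) (d - k).

Lemma binom_conv0 u v : binom_conv u v 0 = 1.
Proof. by rewrite /binom_conv big_ord1 !gbinom0 mulr1. Qed.

Lemma binom_convSr u v d :
  binom_conv u v d.+1 = binom_conv u (v - 1) d.+1 + binom_conv u (v - 1) d.
Proof.
rewrite /binom_conv big_ord_recr [in X in _ = X + _]big_ord_recr /=.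
rewrite !subnn !gbinom0 addrAC -big_split /=; congr (_ + _).
apply: eq_bigr => k _; have kd : (k <= d)%N by rewrite -ltnS.
by rewrite -mulrDr (subSn kd) gbinomS -(subSn kd) addrAC.
Qed.

Lemma binom_convSl u v d :
  binom_conv u v d.+1 = binom_conv (u - 1) v d.+1 + binom_conv (u - 2) (v + 1) d.
Proof.
rewrite /binom_conv big_ord_recl [in X in _ = X + _]big_ord_recl /=.
rewrite !subn0 !gbinom0 -addrA -big_split /=; congr (_ + _).
apply: eq_bigr => k _; rewrite /bump /= add1n subSS gbinomS mulrDl.
by congr (gbinom _ _ * _ + gbinom _ _ * gbinom _ _); rewrite mulrS; ring.
Qed.

Lemma binom_conv_shift u v d : binom_conv (u + 1) (v - 1) d = binom_conv u v d.
Proof.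
elim: d u v => [|d IHd] u v; first by rewrite !binom_conv0.
rewrite binom_convSl [RHS]binom_convSr addrK -IHd.
by congr (_ + binom_conv _ _ _); ring.
Qed.

Definition lcenter (i : nat) : rat := (i%:R - 1) / 2%:R.

Lemma lpoly_binom_conv i j x :
  lpoly i j x = binom_conv (lcenter i + x) (lcenter i - x) (i - j).
Proof.
by apply: eq_bigr => k _; congr (_ * gbinom _ _); rewrite /lcenter; ring.
Qed.

Lemma lpoly_shift i j x : lpoly i j (x + 1) = lpoly i j x.
Proof. by rewrite !lpoly_binom_conv addrA opprD addrA binom_conv_shift. Qed.

Lemma lpoly_nat i j n : lpoly i j n%:R = l i j.
Proof. by elim: n => [|n IHn] //; rewrite -addn1 natrD lpoly_shift. Qed.

Definition gbinom_poly (c s : rat) (k : nat) : {poly rat} :=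
  \prod_(m < k) (s *: 'X + (c - m%:R)%:P) * ((k`!)%:R^-1)%:P.

Lemma horner_gbinom_poly c s k x : (gbinom_poly c s k).[x] = gbinom (c + s * x) k.
Proof.
rewrite /gbinom_poly /gbinom hornerM horner_prod hornerC; congr (_ * _).
by apply: eq_bigr => m _; rewrite hornerD hornerZ hornerX hornerC; ring.
Qed.

Definition lpoly_poly (i j : nat) : {poly rat} :=
  \sum_(k < (i - j).+1)
     gbinom_poly (lcenter i - k%:R) 1 k * gbinom_poly (lcenter i + k%:R) (-1) (i - j - k).

Lemma horner_lpoly_poly i j x : (lpoly_poly i j).[x] = lpoly i j x.
Proof.
rewrite horner_sum; apply: eq_bigr => k _; rewrite hornerM !horner_gbinom_poly.
by congr (gbinom _ _ * gbinom _ _); rewrite /lcenter; ring.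
Qed.

Lemma lpoly_const i j x : lpoly i j x = l i j.
Proof.
have /(congr1 (horner^~ x)) : lpoly_poly i j = (l i j)%:P.
  by apply: poly_const_on_nat => n; rewrite horner_lpoly_poly lpoly_nat.
by rewrite horner_lpoly_poly hornerC.
Qed.

Lemma l_diag n : l n n = 1.
Proof. by rewrite /l lpoly_binom_conv subnn binom_conv0. Qed.

Lemma l_pascal n j : (j < n)%N -> l n.+1 j.+1 = l n j + l n j.+1.
Proof.
move=> jn; have n_j : (n - j = (n - j.+1).+1)%N by lia.
have lcenterS : lcenter n.+1 = lcenter n + 1 / 2.
  by rewrite /lcenter -addn1 natrD; field.
rewrite -(lpoly_const n j (1 / 2)) -(lpoly_const n j.+1 (1 / 2)) /l.
rewrite !lpoly_binom_conv subSS n_j binom_convSr lcenterS.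
by congr (binom_conv _ _ _ + binom_conv _ _ _); field.
Qed.

Lemma Lmat_pascal n j : Lmat n.+1 j.+1 = Lmat n j + Lmat n j.+1.
Proof.
rewrite /Lmat ltnS; case: ltngtP => [/l_pascal // | _ | ->]; first by rewrite addr0.
by rewrite !l_diag addr0.
Qed.

Lemma Lmat_lower i j : (i < j)%N -> Lmat i j = 0.
Proof. by rewrite /Lmat ltnNge => /negbTE ->. Qed.

Lemma Mmat_LU i j : Mmat i j = \sum_(k < i.+1) Lmat i k * Umat k j.
Proof.
have -> : Mmat i j = Lmat (i + j) j by rewrite /Lmat leq_addl.
by rewrite (pascal_lower_factor Lmat_pascal Lmat_lower).
Qed.

Lemma lead_submx_Mmat n :
  lead_submx Mmat n = lead_submx Lmat n *m lead_submx Umat n.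
Proof.
apply/matrixP => i j; rewrite !mxE Mmat_LU.
rewrite (@big_ord_widen_supp _ _ n (fun k => Lmat i k * Umat k j)) //.
  by apply: eq_bigr => k _; rewrite !mxE.
by move=> k ik; rewrite Lmat_lower ?mul0r.
Qed.

Lemma det_lead_submx_Lmat n : \det (lead_submx Lmat n) = 1.
Proof.
rewrite det_trig; first by rewrite big1 // => k _; rewrite mxE /Lmat leqnn l_diag.
by apply/is_trig_mxP => i j ij; rewrite mxE Lmat_lower.
Qed.

Lemma det_lead_submx_Umat n : \det (lead_submx Umat n) = 1.
Proof.
rewrite -det_tr det_trig; first by rewrite big1 // => k _; rewrite !mxE /Umat binn.
by apply/is_trig_mxP => i j ij; rewrite !mxE /Umat bin_small.
Qed.

Theorem proposition4p5 :
  (forall i j : nat,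
      Mmat i j = \sum_(k < i.+1) Lmat i k * Umat k j) /\
  (forall n : nat, (1 <= n)%N -> \det (lead_submx Mmat n) = 1).
Proof.
split; first exact: Mmat_LU.
move=> n _.
by rewrite lead_submx_Mmat det_mulmx det_lead_submx_Lmat det_lead_submx_Umat mulr1.
Qed.
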